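(* Let $\alpha\in(1,2)$, $\sigma=1-\alpha/2$, $T>0$, $N$ a positive integer and $\tau=T/N$, and let the coefficients $c_l^{(k,\alpha)}$ be as defined in the context. Then for every integer $k\ge1$: (i) $c_0^{(k,\alpha)}>c_1^{(k,\alpha)}>\cdots>c_{k-1}^{(k,\alpha)}>c_k^{(k,\alpha)}>\frac{3(k+\sigma)^{1-\alpha}}{8}\tau^{2-\alpha}>0$; (ii) $4\sigma c_0^{(k,\alpha)}-(1+2\sigma)c_1^{(k,\alpha)}>0$; and for $1\le k\le N$: (iii) $\sum_{m=1}^{k}c_{m-1}^{(m,\alpha)}<\frac{(8\sigma+21)T^{2-\alpha}}{16(1+2\sigma)\sigma}$; (iv) there is a positive constant $C$, independent of $\tau$ and $k$, such that $$\sum_{m=1}^{k}\big(c_m^{(m,\alpha)}\big)^2\le\frac{9C}{16(1+2\sigma)^2}\begin{cases}\frac{(1+\sigma)^2T^{3-2\alpha}}{3-2\alpha}\tau+(1+\sigma)^{4-2\alpha}, & \alpha\in(1,1.5),\\ (1+\sigma)T, & \alpha=1.5,\\ \frac{2-3\sigma}{2\alpha-3}(1+\sigma)^{4-2\alpha}\tau^{4-2\alpha}, & \alpha\in(1.5,2).\end{cases}$$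
   Context: For integers $k\ge1$ define $a_1^{(k,\alpha)}=\frac32\tau^{2-\alpha}\int_0^{1/2}(s-\frac13)(k+\sigma-s)^{1-\alpha}\,\mathrm{d}s$; $a_l^{(k,\alpha)}=\tau^{2-\alpha}\int_0^1(s-\frac12)(k+\sigma-l+\frac32-s)^{1-\alpha}\,\mathrm{d}s$ for $2\le l\le k$; $b_l^{(k,\alpha)}=\tau^{2-\alpha}\int_0^1(\frac32-s)(k+\sigma-l+\frac12-s)^{1-\alpha}\,\mathrm{d}s$ for $1\le l\le k-1$; $b_k^{(k,\alpha)}=\tau^{2-\alpha}\int_0^{\sigma+1/2}s^{1-\alpha}\,\mathrm{d}s$; $c_l^{(k,\alpha)}=a_{k-l}^{(k,\alpha)}+b_{k-l}^{(k,\alpha)}$ for $0\le l\le k-1$, and $c_k^{(k,\alpha)}=\frac32\tau^{2-\alpha}\int_0^{1/2}(1-s)(k+\sigma-s)^{1-\alpha}\,\mathrm{d}s$. *)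

From Stdlib Require Import Reals.
From Coquelicot Require Import Coquelicot.
Open Scope R_scope.

Definition sigma_of (alpha : R) : R := 1 - alpha / 2.

Definition acoef (alpha tau : R) (k l : nat) : R :=
  let s0 := sigma_of alpha in
  if Nat.eqb l 1 then
    (3/2) * Rpower tau (2 - alpha) *
      RInt (fun s => (s - 1/3) * Rpower (INR k + s0 - s) (1 - alpha)) 0 (1/2)
  else
    Rpower tau (2 - alpha) *
      RInt (fun s => (s - 1/2) * Rpower (INR k + s0 - INR l + 3/2 - s) (1 - alpha)) 0 1.

Definition bcoef (alpha tau : R) (k l : nat) : R :=
  let s0 := sigma_of alpha in
  if Nat.eqb l k then
    Rpower tau (2 - alpha) *
      RInt_gen (fun s => Rpower s (1 - alpha)) (at_right 0) (at_point (s0 + 1/2))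
  else
    Rpower tau (2 - alpha) *
      RInt (fun s => (3/2 - s) * Rpower (INR k + s0 - INR l + 1/2 - s) (1 - alpha)) 0 1.

Definition ccoef (alpha tau : R) (k l : nat) : R :=
  if Nat.eqb l k then
    (3/2) * Rpower tau (2 - alpha) *
      RInt (fun s => (1 - s) * Rpower (INR k + sigma_of alpha - s) (1 - alpha)) 0 (1/2)
  else acoef alpha tau k (k - l) + bcoef alpha tau k (k - l).

From Stdlib Require Import Reals Lra Lia.
From Coquelicot Require Import Coquelicot.
Open Scope R_scope.

(* Each coefficient is [τ^(2-α)] times the integral of a polynomial weight against the
   decreasing convex function [u ↦ u^(1-α)] (for [b_k] an improper integral, evaluated in
   closed form). Bounding the integrand on its interval by a polynomial of degree at most two,
   using the monotonicity of [u^(1-α)], its chords, or the monotonicity of the difference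
   [u^(1-α) - (u+1)^(1-α)], reduces (i) and (ii) to inequalities between a few values of
   [u^(1-α)]. In (iii) the sum telescopes against the primitive of [u^(1-α)]. In (iv),
   [0 < c_m^(m) <= (9/16) τ^(2-α) (m+σ-1/2)^(1-α)], so the sum of squares is at most [k] equal
   terms when [α <= 3/2], and is dominated by the convergent integral of [u^(2-2α)] when
   [α > 3/2]. *)

Lemma INR_ge_1 n : (1 <= n)%nat -> 1 <= INR n.
Proof. intros Hn. apply (le_INR 1) in Hn. simpl in Hn. exact Hn. Qed.

Lemma Rpower_gt0 x e : 0 < Rpower x e.
Proof. apply exp_pos. Qed.

Lemma Rpower_succ_exponent x e : 0 < x -> Rpower x (e + 1) = Rpower x e * x.
Proof. intros Hx. rewrite Rpower_plus, Rpower_1 by exact Hx. reflexivity. Qed.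

Lemma Rlt_Rpower_l_neg e x y : e < 0 -> 0 < x < y -> Rpower y e < Rpower x e.
Proof.
  intros He [Hx Hxy]. apply exp_increasing.
  pose proof (ln_increasing x y Hx Hxy). nra.
Qed.

Lemma Rle_Rpower_l_neg e x y : e < 0 -> 0 < x <= y -> Rpower y e <= Rpower x e.
Proof.
  intros He [Hx [Hxy | <-]]; [|lra].
  left. apply Rlt_Rpower_l_neg; lra.
Qed.

Lemma Rmult_Rpower_le b x y : -1 < b -> 0 < x <= y -> x * Rpower x b <= y * Rpower y b.
Proof.
  intros Hb Hxy.
  rewrite !(Rmult_comm _ (Rpower _ b)), <- !Rpower_succ_exponent by lra.
  apply Rle_Rpower_l; lra.
Qed.

Lemma Rpower_deriv_lt b x y : b < 0 -> 0 < x < y ->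
  b * Rpower x (b - 1) < b * Rpower y (b - 1).
Proof. intros Hb Hxy. pose proof (Rlt_Rpower_l_neg (b - 1) x y ltac:(lra) Hxy). nra. Qed.

Lemma Rpower_convex_neg b x z t : b < 0 -> 0 < x < z -> 0 < t < 1 ->
  Rpower (t * x + (1 - t) * z) b <= t * Rpower x b + (1 - t) * Rpower z b.
Proof.
  intros Hb Hxz Ht.
  set (y := t * x + (1 - t) * z).
  assert (Hxy : x < y) by (unfold y; nra).
  assert (Hyz : y < z) by (unfold y; nra).
  destruct (MVT_cor2 (fun u => Rpower u b) (fun u => b * Rpower u (b - 1)) x y Hxy)
    as [c1 [E1 H1]].
  { intros c Hc. apply derivable_pt_lim_power. lra. }
  destruct (MVT_cor2 (fun u => Rpower u b) (fun u => b * Rpower u (b - 1)) y z Hyz)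
    as [c2 [E2 H2]].
  { intros c Hc. apply derivable_pt_lim_power. lra. }
  pose proof (Rpower_deriv_lt b c1 c2 Hb ltac:(lra)).
  assert (Ey : t * Rpower x b + (1 - t) * Rpower z b - Rpower y b
               = t * (1 - t) * (z - x) * (b * Rpower c2 (b - 1) - b * Rpower c1 (b - 1))).
  { transitivity ((1 - t) * (Rpower z b - Rpower y b) - t * (Rpower y b - Rpower x b));
      [ring|].
    rewrite E1, E2. unfold y. ring. }
  assert (0 <= t * (1 - t) * (z - x)) by (apply Rmult_le_pos; nra).
  nra.
Qed.

Lemma Rpower_diff_succ_le b y y' : b < 0 -> 0 < y <= y' ->
  Rpower y' b - Rpower (y' + 1) b <= Rpower y b - Rpower (y + 1) b.
Proof.
  intros Hb [Hy [Hyy | <-]]; [|lra].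
  destruct (MVT_cor2 (fun u => Rpower u b - Rpower (u + 1) b)
              (fun u => b * Rpower u (b - 1) - b * Rpower (u + 1) (b - 1)) y y' Hyy)
    as [c [E Hc]].
  { intros c Hc. apply derivable_pt_lim_minus.
    - apply derivable_pt_lim_power. lra.
    - rewrite <- (Rmult_1_r (b * Rpower (c + 1) (b - 1))).
      apply (derivable_pt_lim_comp (fun u => u + 1) (fun x => Rpower x b)).
      + apply is_derive_Reals. auto_derive; auto.
      + apply derivable_pt_lim_power. lra. }
  pose proof (Rpower_deriv_lt b c (c + 1) Hb ltac:(lra)). nra.
Qed.

Lemma Rpower_diff_succ_gt0 b y : b < 0 -> 0 < y -> 0 < Rpower y b - Rpower (y + 1) b.
Proof. intros Hb Hy. pose proof (Rlt_Rpower_l_neg b y (y + 1) Hb ltac:(lra)). lra. Qed.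

Lemma is_derive_Rpower_primitive e x : e + 1 <> 0 -> 0 < x ->
  is_derive (fun u => Rpower u (e + 1) / (e + 1)) x (Rpower x e).
Proof.
  intros He Hx. unfold Rpower. auto_derive; [lra|].
  fold (Rpower x (e + 1)) (Rpower x e). rewrite Rpower_succ_exponent by exact Hx.
  field. split; lra.
Qed.

(* only one-sided: [Rpower 0 e = 1] because of the junk value [ln 0 = 0] *)
Lemma Rpower_at_right0 e : 0 < e -> filterlim (fun u => Rpower u e) (at_right 0) (locally 0).
Proof.
  intros He. apply filterlim_locally. intros eps.
  exists (mkposreal _ (Rpower_gt0 eps (/ e))). intros y Hy Hy0. simpl in Hy.
  unfold ball in Hy |- *; simpl in Hy |- *.
  unfold AbsRing_ball, abs, minus, plus, opp in Hy |- *; simpl in Hy |- *.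
  apply Rabs_def2 in Hy. rewrite Ropp_0, Rplus_0_r in Hy |- *.
  rewrite Rabs_right by (left; apply Rpower_gt0).
  destruct eps as [eps Heps]; simpl in Hy |- *.
  replace eps with (Rpower (Rpower eps (/ e)) e)
    by (rewrite Rpower_mult, Rinv_l, Rpower_1 by lra; reflexivity).
  apply Rlt_Rpower_l; lra.
Qed.

Lemma RInt_gen_Rpower_at_right0 e r : -1 < e -> 0 < r ->
  RInt_gen (fun u => Rpower u e) (at_right 0) (at_point r) = Rpower r (e + 1) / (e + 1).
Proof.
  intros He Hr.
  set (G := fun u => Rpower u (e + 1) / (e + 1)).
  assert (Hnear : filter_prod (at_right 0) (at_point r) (fun ab => 0 < fst ab < r /\ snd ab = r)).
  { apply (Filter_prod _ _ _ (fun x => 0 < x < r) (fun y => y = r)); [|reflexivity|now split].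
    exists (mkposreal r Hr). intros y Hy Hy0. simpl in Hy.
    unfold ball in Hy; simpl in Hy; unfold AbsRing_ball, abs, minus, plus, opp in Hy; simpl in Hy.
    apply Rabs_def2 in Hy. lra. }
  assert (HG : forall z, 0 < z -> is_derive G z (Rpower z e))
    by (intros z Hz; apply is_derive_Rpower_primitive; lra).
  apply is_RInt_gen_unique.
  replace (Rpower r (e + 1) / (e + 1)) with (G r - 0) by (unfold G; ring).
  apply (is_RInt_gen_ext (Derive G)).
  { eapply filter_imp; [|exact Hnear]. intros [x y] [Hx Hy] z Hz; simpl in *. subst y.
    rewrite Rmin_left, Rmax_right in Hz by lra. apply is_derive_unique, HG. lra. }
  apply is_RInt_gen_Derive.
  - eapply filter_imp; [|exact Hnear]. intros [x y] [Hx Hy] z Hz; simpl in *. subst y.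
    rewrite Rmin_left, Rmax_right in Hz by lra. eexists. apply HG. lra.
  - eapply filter_imp; [|exact Hnear]. intros [x y] [Hx Hy] z Hz; simpl in *. subst y.
    rewrite Rmin_left, Rmax_right in Hz by lra.
    apply (continuous_ext_loc _ (fun u => Rpower u e)).
    + generalize (open_gt 0 z ltac:(lra)). apply filter_imp.
      intros u Hu. symmetry. apply is_derive_unique, HG. exact Hu.
    + apply (@ex_derive_continuous R_AbsRing R_NormedModule). unfold Rpower. auto_derive. lra.
  - apply (filterlim_comp _ _ _ (fun u => Rpower u (e + 1)) (fun v => v / (e + 1)) _ (locally 0)).
    + apply Rpower_at_right0. lra.
    + assert (Hc : continuous (fun v => v / (e + 1)) 0).
      { apply (@ex_derive_continuous R_AbsRing R_NormedModule). auto_derive. lra. }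
      unfold continuous in Hc. rewrite Rdiv_0_l in Hc. exact Hc.
  - intros P HP. exact (locally_singleton _ _ HP).
Qed.

Lemma is_RInt_quadratic a b c0 c1 c2 :
  is_RInt (fun s => c0 + c1 * s + c2 * s * s) a b
    (c0 * (b - a) + c1 * (b * b - a * a) / 2 + c2 * (b * b * b - a * a * a) / 3).
Proof.
  set (F := fun s => c0 * s + c1 * (s * s) / 2 + c2 * (s * s * s) / 3).
  replace (c0 * (b - a) + c1 * (b * b - a * a) / 2 + c2 * (b * b * b - a * a * a) / 3)
    with (minus (F b) (F a)) by (unfold F, minus, plus, opp; simpl; field).
  apply (@is_RInt_derive R_CompleteNormedModule F).
  - intros x _. unfold F. auto_derive; auto. field.
  - intros x _. apply (@ex_derive_continuous R_AbsRing R_NormedModule). auto_derive. auto.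
Qed.

Lemma RInt_ge_quadratic (g : R -> R) a b c0 c1 c2 : a <= b -> ex_RInt g a b ->
  (forall s, a < s < b -> c0 + c1 * s + c2 * s * s <= g s) ->
  c0 * (b - a) + c1 * (b * b - a * a) / 2 + c2 * (b * b * b - a * a * a) / 3 <= RInt g a b.
Proof.
  intros Hab Hg Hp.
  rewrite <- (is_RInt_unique _ _ _ _ (is_RInt_quadratic a b c0 c1 c2)).
  apply RInt_le; auto. eexists. apply is_RInt_quadratic.
Qed.

Lemma RInt_le_quadratic (g : R -> R) a b c0 c1 c2 : a <= b -> ex_RInt g a b ->
  (forall s, a < s < b -> g s <= c0 + c1 * s + c2 * s * s) ->
  RInt g a b <= c0 * (b - a) + c1 * (b * b - a * a) / 2 + c2 * (b * b * b - a * a * a) / 3.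
Proof.
  intros Hab Hg Hp.
  rewrite <- (is_RInt_unique _ _ _ _ (is_RInt_quadratic a b c0 c1 c2)).
  apply RInt_le; auto. eexists. apply is_RInt_quadratic.
Qed.

Lemma RInt_Rpower_shift e Y : e + 1 <> 0 -> 1 < Y ->
  RInt (fun s => Rpower (Y - s) e) 0 1 = (Rpower Y (e + 1) - Rpower (Y - 1) (e + 1)) / (e + 1).
Proof.
  intros He HY. apply is_RInt_unique.
  set (G := fun s => - (Rpower (Y - s) (e + 1) / (e + 1))).
  replace ((Rpower Y (e + 1) - Rpower (Y - 1) (e + 1)) / (e + 1)) with (minus (G 1) (G 0))
    by (unfold G, minus, plus, opp; simpl; rewrite Rminus_0_r; field; exact He).
  apply (@is_RInt_derive R_CompleteNormedModule G).
  - intros x Hx. rewrite Rmin_left, Rmax_right in Hx by lra.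
    unfold G, Rpower. auto_derive; [lra|].
    replace (Y + - x) with (Y - x) by ring.
    fold (Rpower (Y - x) (e + 1)) (Rpower (Y - x) e).
    rewrite Rpower_succ_exponent by lra. field. split; lra.
  - intros x Hx. rewrite Rmin_left, Rmax_right in Hx by lra.
    apply (@ex_derive_continuous R_AbsRing R_NormedModule). unfold Rpower. auto_derive. lra.
Qed.

Ltac solve_ex_RInt :=
  apply (@ex_RInt_continuous R_CompleteNormedModule); intros z Hz;
  rewrite ?Rmin_left, ?Rmax_right in Hz by lra;
  apply (@ex_derive_continuous R_AbsRing R_NormedModule); unfold Rpower; auto_derive;
  repeat split; lra.

Lemma Rpower_le_primitive_diff e Y : e < 0 -> e + 1 <> 0 -> 1 < Y ->
  Rpower Y e <= (Rpower Y (e + 1) - Rpower (Y - 1) (e + 1)) / (e + 1).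
Proof.
  intros He He1 HY. rewrite <- RInt_Rpower_shift by assumption.
  eapply Rle_trans; [|apply (RInt_ge_quadratic _ 0 1 (Rpower Y e) 0 0)];
    [lra | lra | solve_ex_RInt |].
  intros s Hs. pose proof (Rle_Rpower_l_neg e (Y - s) Y He ltac:(lra)). lra.
Qed.

Lemma RInt_minus_R (f g : R -> R) a b : ex_RInt f a b -> ex_RInt g a b ->
  RInt f a b - RInt g a b = RInt (fun x => f x - g x) a b.
Proof. intros Hf Hg. exact (eq_sym (RInt_minus f g a b Hf Hg)). Qed.

Lemma RInt_plus_R (f g : R -> R) a b : ex_RInt f a b -> ex_RInt g a b ->
  RInt f a b + RInt g a b = RInt (fun x => f x + g x) a b.
Proof. intros Hf Hg. exact (eq_sym (RInt_plus f g a b Hf Hg)). Qed.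

Lemma sum_f_telescoping_le (g h : nat -> R) k : (1 <= k)%nat ->
  g 1%nat <= h 1%nat -> (forall m, (1 <= m)%nat -> g (S m) <= h (S m) - h m) ->
  sum_f 1 k g <= h k.
Proof.
  intros Hk H1 Hstep. induction k as [|k IH]; [lia|].
  destruct (Nat.eq_dec k 0) as [->|Hk0]; [exact H1|].
  unfold sum_f in *. replace (S k - 1)%nat with (S (k - 1)) by lia. simpl sum_f_R0.
  replace (S (k - 1 + 1)) with (S k) by lia.
  specialize (IH ltac:(lia)). specialize (Hstep k ltac:(lia)). lra.
Qed.

(* With [b = 1 - α]: [a_l = τ^(2-α) a_int b (k+σ-l+3/2)] for [l >= 2],
   [a_1 = (3/2) τ^(2-α) a1_int b (k+σ)], [b_l = τ^(2-α) b_int b (k+σ-l+1/2)] for [l < k],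
   and [c_k = (3/2) τ^(2-α) ck_int b (k+σ)]. *)
Definition a_int b Y := RInt (fun s => (s - 1/2) * Rpower (Y - s) b) 0 1.
Definition b_int b Y := RInt (fun s => (3/2 - s) * Rpower (Y - s) b) 0 1.
Definition a1_int b Y := RInt (fun s => (s - 1/3) * Rpower (Y - s) b) 0 (1/2).
Definition ck_int b Y := RInt (fun s => (1 - s) * Rpower (Y - s) b) 0 (1/2).

Section Kernels.

Variable b : R.
Hypothesis Hb : -1 < b < 0.
Let Hb_neg : b < 0 := proj2 Hb.

Lemma a_int_ge0 Y : 1 < Y -> 0 <= a_int b Y.
Proof.
  intros HY. unfold a_int. set (F := Rpower (Y - 1/2) b).
  eapply Rle_trans; [|apply (RInt_ge_quadratic _ 0 1 (-(1/2) * F) F 0)];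
    [lra | lra | solve_ex_RInt |].
  intros s Hs. destruct (Rle_dec s (1/2)).
  - pose proof (Rle_Rpower_l_neg b (Y - 1/2) (Y - s) Hb_neg ltac:(lra)). unfold F. nra.
  - pose proof (Rle_Rpower_l_neg b (Y - s) (Y - 1/2) Hb_neg ltac:(lra)). unfold F. nra.
Qed.

Lemma a_int_succ_le Y : 1 < Y -> a_int b (Y + 1) <= a_int b Y.
Proof.
  intros HY. unfold a_int.
  cut (0 <= RInt (fun s => (s - 1/2) * Rpower (Y - s) b) 0 1 -
            RInt (fun s => (s - 1/2) * Rpower (Y + 1 - s) b) 0 1); [lra|].
  rewrite RInt_minus_R by solve_ex_RInt.
  set (F := Rpower (Y - 1/2) b - Rpower (Y - 1/2 + 1) b).
  eapply Rle_trans; [|apply (RInt_ge_quadratic _ 0 1 (-(1/2) * F) F 0)];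
    [lra | lra | solve_ex_RInt |].
  intros s Hs. replace (Y + 1 - s) with (Y - s + 1) by ring.
  destruct (Rle_dec s (1/2)).
  - pose proof (Rpower_diff_succ_le b (Y - 1/2) (Y - s) Hb_neg ltac:(lra)). unfold F. nra.
  - pose proof (Rpower_diff_succ_le b (Y - s) (Y - 1/2) Hb_neg ltac:(lra)). unfold F. nra.
Qed.

Lemma a_int_le Y : 1 < Y -> a_int b Y <= 1/2 * (Rpower (Y - 1) b - Rpower Y b).
Proof.
  intros HY. unfold a_int. set (F := Rpower (Y - 1/2) b).
  set (G := Rpower (Y - 1) b - Rpower Y b).
  eapply Rle_trans; [apply (RInt_le_quadratic _ 0 1 (-(1/2) * F + 1/2 * G) F 0)|];
    [lra | solve_ex_RInt | | lra].
  intros s Hs.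
  pose proof (Rle_Rpower_l_neg b (Y - 1) (Y - s) Hb_neg ltac:(lra)).
  pose proof (Rle_Rpower_l_neg b (Y - s) Y Hb_neg ltac:(lra)).
  pose proof (Rle_Rpower_l_neg b (Y - 1) (Y - 1/2) Hb_neg ltac:(lra)).
  pose proof (Rle_Rpower_l_neg b (Y - 1/2) Y Hb_neg ltac:(lra)).
  unfold F, G in *. destruct (Rle_dec s (1/2)).
  - pose proof (Rle_Rpower_l_neg b (Y - 1/2) (Y - s) Hb_neg ltac:(lra)). nra.
  - pose proof (Rle_Rpower_l_neg b (Y - s) (Y - 1/2) Hb_neg ltac:(lra)). nra.
Qed.

Lemma b_int_succ_le Y : 1 < Y -> b_int b (Y + 1) + (Rpower Y b - Rpower (Y + 1) b) <= b_int b Y.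
Proof.
  intros HY. unfold b_int.
  cut (Rpower Y b - Rpower (Y + 1) b <= RInt (fun s => (3/2 - s) * Rpower (Y - s) b) 0 1 -
             RInt (fun s => (3/2 - s) * Rpower (Y + 1 - s) b) 0 1); [lra|].
  rewrite RInt_minus_R by solve_ex_RInt.
  set (F := Rpower Y b - Rpower (Y + 1) b).
  eapply Rle_trans; [|apply (RInt_ge_quadratic _ 0 1 (3/2 * F) (- F) 0)];
    [lra | lra | solve_ex_RInt |].
  intros s Hs. replace (Y + 1 - s) with (Y - s + 1) by ring.
  pose proof (Rpower_diff_succ_le b (Y - s) Y Hb_neg ltac:(lra)). unfold F. nra.
Qed.

(* the chord of the convex function [u ↦ u^b] on [[Y - 1, Y]] lies above it *)
Lemma b_int_le_chord Y : 1 < Y -> b_int b Y <= 5/12 * Rpower (Y - 1) b + 7/12 * Rpower Y b.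
Proof.
  intros HY. unfold b_int. set (F0 := Rpower (Y - 1) b). set (F1 := Rpower Y b).
  eapply Rle_trans;
    [apply (RInt_le_quadratic _ 0 1 (3/2 * F1) (3/2 * (F0 - F1) - F1) (- (F0 - F1)))|];
    [lra | solve_ex_RInt | | lra].
  intros s Hs.
  pose proof (Rpower_convex_neg b (Y - 1) Y s Hb_neg ltac:(lra) ltac:(lra)) as C.
  replace (s * (Y - 1) + (1 - s) * Y) with (Y - s) in C by ring.
  unfold F0, F1 in *. nra.
Qed.

Lemma b_int_ge Y : 1 < Y -> Rpower Y b <= b_int b Y.
Proof.
  intros HY. unfold b_int. set (F := Rpower Y b).
  eapply Rle_trans; [|apply (RInt_ge_quadratic _ 0 1 (3/2 * F) (- F) 0)];
    [lra | lra | solve_ex_RInt |].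
  intros s Hs. pose proof (Rle_Rpower_l_neg b (Y - s) Y Hb_neg ltac:(lra)). unfold F. nra.
Qed.

Lemma b_int_le_primitive Y : 1 < Y ->
  b_int b Y <= (Rpower Y (b + 1) - Rpower (Y - 1) (b + 1)) / (b + 1).
Proof.
  intros HY. unfold b_int. set (F := Rpower (Y - 1/2) b).
  apply Rle_trans with (RInt (fun s => Rpower (Y - s) b + (F / 2 + (- F) * s + 0 * s * s)) 0 1).
  - apply RInt_le; [lra | solve_ex_RInt | unfold F; solve_ex_RInt |].
    intros s Hs. destruct (Rle_dec s (1/2)).
    + pose proof (Rle_Rpower_l_neg b (Y - 1/2) (Y - s) Hb_neg ltac:(lra)). unfold F. nra.
    + pose proof (Rle_Rpower_l_neg b (Y - s) (Y - 1/2) Hb_neg ltac:(lra)). unfold F. nra.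
  - rewrite <- RInt_plus_R by (solve_ex_RInt || (eexists; apply is_RInt_quadratic)).
    rewrite RInt_Rpower_shift by lra.
    rewrite (is_RInt_unique _ _ _ _ (is_RInt_quadratic 0 1 (F / 2) (- F) 0)). lra.
Qed.

Lemma a1_int_le0 Y : 1 <= Y -> a1_int b Y <= 0.
Proof.
  intros HY. unfold a1_int. set (F := Rpower (Y - 1/2) b). set (G := Rpower Y b).
  assert (HFG : F <= 2 * G).
  { pose proof (Rmult_Rpower_le b (Y - 1/2) Y (proj1 Hb) ltac:(lra)).
    pose proof (Rpower_gt0 (Y - 1/2) b). unfold F, G in *. nra. }
  assert (HGF : G <= F) by (apply Rle_Rpower_l_neg; lra).
  eapply Rle_trans; [apply (RInt_le_quadratic _ 0 (1/2) (-(1/3) * G) G (2/3 * (F - G)))|];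
    [lra | solve_ex_RInt | | lra].
  intros s Hs.
  pose proof (Rle_Rpower_l_neg b (Y - s) Y Hb_neg ltac:(lra)) as HG.
  pose proof (Rle_Rpower_l_neg b (Y - 1/2) (Y - s) Hb_neg ltac:(lra)) as HF.
  fold G in HG. fold F in HF. destruct (Rle_dec s (1/3)).
  - nra.
  - assert (s - 1/3 <= 2/3 * s * s) by nra. nra.
Qed.

Lemma a1_int_ge Y : 1/2 < Y -> -(1/24) * Rpower (Y - 1/2) b <= a1_int b Y.
Proof.
  intros HY. unfold a1_int. set (G := Rpower (Y - 1/3) b).
  assert (G <= Rpower (Y - 1/2) b) by (apply Rle_Rpower_l_neg; lra).
  eapply Rle_trans; [|apply (RInt_ge_quadratic _ 0 (1/2) (-(1/3) * G) G 0)];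
    [lra | lra | solve_ex_RInt |].
  intros s Hs. destruct (Rle_dec s (1/3)).
  - pose proof (Rle_Rpower_l_neg b (Y - 1/3) (Y - s) Hb_neg ltac:(lra)) as HG.
    fold G in HG. nra.
  - pose proof (Rle_Rpower_l_neg b (Y - s) (Y - 1/3) Hb_neg ltac:(lra)) as HG.
    fold G in HG. nra.
Qed.

Lemma ck_int_le Y : 1/2 < Y -> ck_int b Y <= 3/8 * Rpower (Y - 1/2) b.
Proof.
  intros HY. unfold ck_int. set (F := Rpower (Y - 1/2) b).
  eapply Rle_trans; [apply (RInt_le_quadratic _ 0 (1/2) F (- F) 0)|];
    [lra | solve_ex_RInt | | lra].
  intros s Hs. pose proof (Rle_Rpower_l_neg b (Y - 1/2) (Y - s) Hb_neg ltac:(lra)) as HF.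
  fold F in HF. nra.
Qed.

Lemma ck_int_ge Y : 1/2 < Y -> 3/8 * Rpower Y b <= ck_int b Y.
Proof.
  intros HY. unfold ck_int. set (F := Rpower Y b).
  eapply Rle_trans; [|apply (RInt_ge_quadratic _ 0 (1/2) F (- F) 0)];
    [lra | lra | solve_ex_RInt |].
  intros s Hs. pose proof (Rle_Rpower_l_neg b (Y - s) Y Hb_neg ltac:(lra)) as HF.
  fold F in HF. nra.
Qed.

End Kernels.

Lemma step_size_pos T N : 0 < T -> (1 <= N)%nat -> 0 < T / INR N.
Proof. intros HT HN. pose proof (INR_ge_1 N HN). apply Rdiv_lt_0_compat; lra. Qed.

Lemma step_size_mul_le T N k : 0 < T -> (1 <= N)%nat -> (k <= N)%nat -> T / INR N * INR k <= T.
Proof.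
  intros HT HN Hk. pose proof (INR_ge_1 N HN). apply le_INR in Hk.
  apply (Rmult_le_reg_r (INR N)); [lra|].
  replace (T / INR N * INR k * INR N) with (T * INR k) by (field; lra). nra.
Qed.

Lemma exists_scaled_constant q c w : 0 < q -> 0 < c -> 0 < w ->
  exists C, 0 < C /\ 9 * C / q * w = c.
Proof.
  intros Hq Hc Hw. exists (c * q / (9 * w)). split.
  - apply Rdiv_lt_0_compat; nra.
  - field. lra.
Qed.

Section Coefficients.

Variable alpha : R.
Hypothesis Halpha : 1 < alpha < 2.

Let Hb : -1 < 1 - alpha < 0.
Proof. lra. Qed.

Local Notation σ := (sigma_of alpha).

Lemma sigma_bounds : 0 < σ < 1/2.
Proof. unfold sigma_of. lra. Qed.

Lemma two_minus_alpha : 2 - alpha = 2 * σ.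
Proof. unfold sigma_of. lra. Qed.

(* [a_part k l] and [b_part l] are [a_(k-l)] and [b_(k-l)] divided by [τ^(2-α)]; [b_part 0] is the
   improper integral [b_k], evaluated. *)
Definition a_part (k l : nat) : R :=
  if Nat.eqb (S l) k then 3/2 * a1_int (1 - alpha) (INR k + σ)
  else a_int (1 - alpha) (σ + INR l + 3/2).

Definition b_part (l : nat) : R :=
  if Nat.eqb l 0 then Rpower (σ + 1/2) (2 - alpha) / (2 - alpha)
  else b_int (1 - alpha) (σ + INR l + 1/2).

Lemma bcoef_diag tau k :
  bcoef alpha tau k k = Rpower tau (2 - alpha) * (Rpower (σ + 1/2) (2 - alpha) / (2 - alpha)).
Proof.
  pose proof sigma_bounds.
  unfold bcoef. rewrite Nat.eqb_refl. cbv zeta.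
  rewrite RInt_gen_Rpower_at_right0 by lra.
  replace (1 - alpha + 1) with (2 - alpha) by ring. reflexivity.
Qed.

Lemma ccoef_lt tau k l : (l < k)%nat ->
  ccoef alpha tau k l = Rpower tau (2 - alpha) * (a_part k l + b_part l).
Proof.
  intros Hl. unfold ccoef.
  replace (Nat.eqb l k) with false by (symmetry; apply Nat.eqb_neq; lia).
  assert (Ea : acoef alpha tau k (k - l) = Rpower tau (2 - alpha) * a_part k l).
  { unfold acoef, a_part, a1_int, a_int. cbv zeta.
    destruct (Nat.eqb_spec (k - l) 1), (Nat.eqb_spec (S l) k); try lia; [ring|].
    replace (INR k + σ - INR (k - l) + 3/2) with (σ + INR l + 3/2)
      by (rewrite minus_INR by lia; ring).
    reflexivity. }
  assert (Eb : bcoef alpha tau k (k - l) = Rpower tau (2 - alpha) * b_part l).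
  { unfold b_part. destruct (Nat.eqb_spec l 0) as [->|Hl0].
    - rewrite Nat.sub_0_r. apply bcoef_diag.
    - unfold bcoef, b_int. cbv zeta.
      replace (Nat.eqb (k - l) k) with false by (symmetry; apply Nat.eqb_neq; lia).
      replace (INR k + σ - INR (k - l) + 1/2) with (σ + INR l + 1/2)
        by (rewrite minus_INR by lia; ring).
      reflexivity. }
  rewrite Ea, Eb. ring.
Qed.

Lemma ccoef_diag tau k :
  ccoef alpha tau k k = 3/2 * Rpower tau (2 - alpha) * ck_int (1 - alpha) (INR k + σ).
Proof. unfold ccoef. rewrite Nat.eqb_refl. reflexivity. Qed.

Lemma b_part_0 : b_part 0 = (σ + 1/2) * Rpower (σ + 1/2) (1 - alpha) / (2 * σ).
Proof.
  pose proof sigma_bounds. unfold b_part. simpl.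
  replace (2 - alpha) with (1 - alpha + 1) at 1 by ring.
  rewrite Rpower_succ_exponent, two_minus_alpha by lra. field. lra.
Qed.

Lemma b_part_ge l : Rpower (σ + INR l + 1/2) (1 - alpha) <= b_part l.
Proof.
  pose proof sigma_bounds.
  destruct (Nat.eq_dec l 0) as [->|Hl0].
  - rewrite b_part_0. simpl INR. rewrite Rplus_0_r.
    pose proof (Rpower_gt0 (σ + 1/2) (1 - alpha)).
    apply Rmult_le_reg_r with (2 * σ); [lra|].
    unfold Rdiv. rewrite Rmult_assoc, Rinv_l by lra. nra.
  - unfold b_part. replace (Nat.eqb l 0) with false by (symmetry; apply Nat.eqb_neq; lia).
    pose proof (INR_ge_1 l ltac:(lia)).
    apply b_int_ge; lra.
Qed.

Lemma b_part_succ_lt l : b_part (S l) < b_part l.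
Proof.
  pose proof sigma_bounds.
  change (b_part (S l)) with (b_int (1 - alpha) (σ + INR (S l) + 1/2)).
  destruct (Nat.eq_dec l 0) as [->|Hl0].
  - simpl INR. pose proof (b_part_ge 0) as Hge. simpl INR in Hge. rewrite Rplus_0_r in *.
    pose proof (b_int_le_chord _ Hb (σ + 1 + 1/2) ltac:(lra)).
    replace (σ + 1 + 1/2 - 1) with (σ + 1/2) in * by ring.
    pose proof (Rlt_Rpower_l_neg (1 - alpha) (σ + 1/2) (σ + 1 + 1/2) ltac:(lra) ltac:(lra)).
    lra.
  - rewrite S_INR. pose proof (INR_ge_1 l ltac:(lia)).
    unfold b_part. replace (Nat.eqb l 0) with false by (symmetry; apply Nat.eqb_neq; lia).
    pose proof (b_int_succ_le _ Hb (σ + INR l + 1/2) ltac:(lra)).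
    pose proof (Rpower_diff_succ_gt0 (1 - alpha) (σ + INR l + 1/2) ltac:(lra) ltac:(lra)).
    replace (σ + (INR l + 1) + 1/2) with (σ + INR l + 1/2 + 1) by ring.
    lra.
Qed.

Lemma a_part_succ_le k l : (S (S l) <= k)%nat -> a_part k (S l) <= a_part k l.
Proof.
  intros Hl. pose proof sigma_bounds. pose proof (pos_INR l).
  unfold a_part. replace (Nat.eqb (S l) k) with false by (symmetry; apply Nat.eqb_neq; lia).
  destruct (Nat.eqb_spec (S (S l)) k) as [<-|Hk].
  - pose proof (a1_int_le0 _ Hb (INR (S (S l)) + σ) ltac:(rewrite !S_INR; lra)).
    pose proof (a_int_ge0 _ Hb (σ + INR l + 3/2) ltac:(lra)).
    lra.
  - rewrite S_INR. replace (σ + (INR l + 1) + 3/2) with (σ + INR l + 3/2 + 1) by lra.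
    apply a_int_succ_le; [exact Hb | lra].
Qed.

Lemma a_part_le_diff k l : (1 <= l)%nat -> (l < k)%nat ->
  a_part k l
  <= 1/2 * (Rpower (σ + INR l + 1/2) (1 - alpha) - Rpower (σ + INR l + 3/2) (1 - alpha)).
Proof.
  intros Hl Hlk. pose proof sigma_bounds. pose proof (INR_ge_1 l Hl).
  pose proof (Rpower_diff_succ_gt0 (1 - alpha) (σ + INR l + 1/2) ltac:(lra) ltac:(lra)) as HD.
  replace (σ + INR l + 1/2 + 1) with (σ + INR l + 3/2) in HD by lra.
  unfold a_part. destruct (Nat.eqb_spec (S l) k) as [<-|Hk].
  - pose proof (a1_int_le0 _ Hb (INR (S l) + σ) ltac:(rewrite S_INR; lra)). lra.
  - pose proof (a_int_le _ Hb (σ + INR l + 3/2) ltac:(lra)) as HA.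
    replace (σ + INR l + 3/2 - 1) with (σ + INR l + 1/2) in HA by lra. lra.
Qed.

Lemma ccoef_last_lt tau l : 0 < tau -> ccoef alpha tau (S l) (S l) < ccoef alpha tau (S l) l.
Proof.
  intros Htau. pose proof sigma_bounds. pose proof (pos_INR l).
  rewrite ccoef_diag, ccoef_lt by lia. unfold a_part. rewrite Nat.eqb_refl.
  assert (EY : INR (S l) + σ - 1/2 = σ + INR l + 1/2) by (rewrite S_INR; lra).
  pose proof (a1_int_ge _ Hb (INR (S l) + σ) ltac:(lra)) as Ha.
  pose proof (ck_int_le _ Hb (INR (S l) + σ) ltac:(lra)) as Hc.
  rewrite EY in Ha, Hc.
  pose proof (b_part_ge l).
  pose proof (Rpower_gt0 (σ + INR l + 1/2) (1 - alpha)).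
  pose proof (Rpower_gt0 tau (2 - alpha)).
  assert (0 < 3/2 * a1_int (1 - alpha) (INR (S l) + σ) + b_part l
              - 3/2 * ck_int (1 - alpha) (INR (S l) + σ)) by lra.
  nra.
Qed.

Lemma ccoef_succ_lt tau k l : 0 < tau -> (l < k)%nat ->
  ccoef alpha tau k (S l) < ccoef alpha tau k l.
Proof.
  intros Htau Hl. destruct (Nat.eq_dec (S l) k) as [<-|Hk]; [now apply ccoef_last_lt|].
  rewrite !ccoef_lt by lia.
  pose proof (a_part_succ_le k l ltac:(lia)). pose proof (b_part_succ_lt l).
  apply Rmult_lt_compat_l; [apply Rpower_gt0 | lra].
Qed.

Lemma ccoef_diag_gt tau k : (1 <= k)%nat ->
  3 * Rpower (INR k + σ) (1 - alpha) / 8 * Rpower tau (2 - alpha) < ccoef alpha tau k k.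
Proof.
  intros Hk. pose proof sigma_bounds. pose proof (INR_ge_1 k Hk).
  rewrite ccoef_diag.
  pose proof (ck_int_ge _ Hb (INR k + σ) ltac:(lra)).
  pose proof (Rpower_gt0 (INR k + σ) (1 - alpha)). pose proof (Rpower_gt0 tau (2 - alpha)).
  nra.
Qed.

Lemma ccoef_0_1_combination_pos tau k : 0 < tau -> (1 <= k)%nat ->
  4 * σ * ccoef alpha tau k 0 - (1 + 2 * σ) * ccoef alpha tau k 1 > 0.
Proof.
  intros Htau Hk. pose proof sigma_bounds.
  pose proof (Rpower_gt0 tau (2 - alpha)) as HP.
  set (F0 := Rpower (σ + 1/2) (1 - alpha)).
  assert (HF0 : 0 < F0) by apply Rpower_gt0.
  assert (HB : 4 * σ * b_part 0 = (1 + 2 * σ) * F0)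
    by (rewrite b_part_0; unfold F0; field; lra).
  rewrite (ccoef_lt tau k 0) by lia.
  destruct (Nat.eq_dec k 1) as [->|Hk1].
  - rewrite ccoef_diag. unfold a_part. simpl Nat.eqb. cbv iota. change (INR 1) with 1.
    pose proof (a1_int_ge _ Hb (1 + σ) ltac:(lra)) as Ha.
    pose proof (ck_int_le _ Hb (1 + σ) ltac:(lra)) as Hc.
    replace (1 + σ - 1/2) with (σ + 1/2) in Ha, Hc by lra. fold F0 in Ha, Hc.
    assert (0 < 4 * σ * (3/2 * a1_int (1 - alpha) (1 + σ) + b_part 0)
                - (1 + 2 * σ) * (3/2 * ck_int (1 - alpha) (1 + σ))) by nra.
    nra.
  - rewrite (ccoef_lt tau k 1) by lia.
    pose proof (a_part_succ_le k 0 ltac:(lia)) as HA.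
    pose proof (a_part_le_diff k 1 ltac:(lia) ltac:(lia)) as HA1.
    change (b_part 1) with (b_int (1 - alpha) (σ + INR 1 + 1/2)).
    change (INR 1) with 1 in *.
    pose proof (b_int_le_chord _ Hb (σ + 1 + 1/2) ltac:(lra)) as Hchord.
    replace (σ + 1 + 1/2 - 1) with (σ + 1/2) in Hchord by lra. fold F0 in Hchord.
    set (F1 := Rpower (σ + 1 + 1/2) (1 - alpha)) in *.
    set (F2 := Rpower (σ + 1 + 3/2) (1 - alpha)) in *.
    assert (HF01 : F1 < F0) by (apply Rlt_Rpower_l_neg; lra).
    assert (HD : F1 - F2 <= F0 - F1).
    { pose proof (Rpower_diff_succ_le (1 - alpha) (σ + 1/2) (σ + 1 + 1/2) ltac:(lra) ltac:(lra))
        as Hdiff.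
      replace (σ + 1/2 + 1) with (σ + 1 + 1/2) in Hdiff by lra.
      replace (σ + 1 + 1/2 + 1) with (σ + 1 + 3/2) in Hdiff by lra. fold F0 F1 F2 in Hdiff. lra. }
    set (A0 := a_part k 0) in *. set (A1 := a_part k 1) in *.
    set (B1 := b_int (1 - alpha) (σ + 1 + 1/2)) in *.
    (* the chord bound gains [7/12 (F0 - F1)] on the [b]-parts, which beats the loss
       [(1 - 2σ)/2 (F1 - F2)] on the [a]-parts since the differences decrease *)
    assert (Hloss : 4 * σ * A0 - (1 + 2 * σ) * A1 >= - (1 - 2 * σ) * (1/2) * (F1 - F2)) by nra.
    assert (Hgain : (1 + 2 * σ) * (F0 - B1) >= (1 + 2 * σ) * (7/12) * (F0 - F1)) by nra.
    assert (Hbeat : (1 + 2 * σ) * (7/12) * (F0 - F1) > (1 - 2 * σ) * (1/2) * (F1 - F2)) by nra.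
    assert (0 < 4 * σ * (A0 + b_part 0) - (1 + 2 * σ) * (A1 + B1)) by lra.
    nra.
Qed.

Lemma b_part_le_primitive l : (1 <= l)%nat ->
  b_part l <= Rpower (σ + INR l + 1/2) (2 - alpha) / (2 - alpha)
              - Rpower (σ + INR l - 1/2) (2 - alpha) / (2 - alpha).
Proof.
  intros Hl. pose proof sigma_bounds. pose proof (INR_ge_1 l Hl).
  unfold b_part. replace (Nat.eqb l 0) with false by (symmetry; apply Nat.eqb_neq; lia).
  pose proof (b_int_le_primitive _ Hb (σ + INR l + 1/2) ltac:(lra)) as Hprim.
  replace (1 - alpha + 1) with (2 - alpha) in Hprim by lra.
  replace (σ + INR l + 1/2 - 1) with (σ + INR l - 1/2) in Hprim by lra.
  unfold Rdiv in *. rewrite <- Rmult_minus_distr_r. exact Hprim.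
Qed.

Lemma ccoef_pred_le tau m : 0 < tau -> (1 <= m)%nat ->
  ccoef alpha tau m (m - 1) <= Rpower tau (2 - alpha) * b_part (m - 1).
Proof.
  intros Htau Hm. pose proof sigma_bounds. pose proof (INR_ge_1 m Hm).
  rewrite ccoef_lt by lia. unfold a_part.
  replace (Nat.eqb (S (m - 1)) m) with true by (symmetry; apply Nat.eqb_eq; lia).
  pose proof (a1_int_le0 _ Hb (INR m + σ) ltac:(lra)).
  pose proof (Rpower_gt0 tau (2 - alpha)). nra.
Qed.

Lemma sum_ccoef_pred_le tau k : 0 < tau -> (1 <= k)%nat ->
  sum_f 1 k (fun m => ccoef alpha tau m (m - 1))
  <= Rpower tau (2 - alpha) * (Rpower (σ + INR k - 1/2) (2 - alpha) / (2 - alpha)).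
Proof.
  intros Htau Hk. pose proof (Rpower_gt0 tau (2 - alpha)).
  apply (sum_f_telescoping_le _
           (fun m => Rpower tau (2 - alpha)
                     * (Rpower (σ + INR m - 1/2) (2 - alpha) / (2 - alpha))));
    [exact Hk | |].
  - pose proof (ccoef_pred_le tau 1 Htau (le_n 1)) as Hc1. change (INR 1) with 1.
    replace (σ + 1 - 1/2) with (σ + 1/2) by lra. exact Hc1.
  - intros m Hm. replace (S m - 1)%nat with m by lia.
    pose proof (ccoef_pred_le tau (S m) Htau ltac:(lia)) as Hc.
    replace (S m - 1)%nat with m in Hc by lia.
    pose proof (b_part_le_primitive m Hm) as Hb_m.
    rewrite S_INR. replace (σ + (INR m + 1) - 1/2) with (σ + INR m + 1/2) by lra.
    rewrite <- Rmult_minus_distr_l.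
    eapply Rle_trans; [exact Hc|]. apply Rmult_le_compat_l; lra.
Qed.

Lemma sum_ccoef_pred_lt T N k : 0 < T -> (1 <= N)%nat -> (1 <= k <= N)%nat ->
  sum_f 1 k (fun m => ccoef alpha (T / INR N) m (m - 1))
  < (8 * σ + 21) * Rpower T (2 - alpha) / (16 * (1 + 2 * σ) * σ).
Proof.
  intros HT HN Hk. pose proof sigma_bounds. pose proof (INR_ge_1 k ltac:(lia)).
  pose proof (step_size_pos T N HT HN) as Htau.
  pose proof (step_size_mul_le T N k HT HN ltac:(lia)) as Htauk.
  set (tau := T / INR N) in *.
  eapply Rle_lt_trans; [apply sum_ccoef_pred_le; [exact Htau | lia]|].
  assert (Hpow : Rpower tau (2 - alpha) * Rpower (σ + INR k - 1/2) (2 - alpha)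
                 <= Rpower T (2 - alpha)).
  { rewrite Rpower_mult_distr by lra. apply Rle_Rpower_l; [lra|]. split; nra. }
  set (RT := Rpower T (2 - alpha)) in *.
  assert (HRT : 0 < RT) by apply Rpower_gt0.
  apply Rle_lt_trans with (RT / (2 - alpha)).
  - unfold Rdiv. rewrite <- Rmult_assoc.
    apply Rmult_le_compat_r; [left; apply Rinv_0_lt_compat; lra | exact Hpow].
  - rewrite two_minus_alpha.
    apply (Rmult_lt_reg_r (16 * (1 + 2 * σ) * σ)); [nra|].
    field_simplify; repeat split; nra.
Qed.

Lemma ccoef_diag_sq_le tau m : 0 < tau -> (1 <= m)%nat ->
  (ccoef alpha tau m m) ^ 2
  <= 81/256 * Rpower tau (4 - 2 * alpha) * Rpower (INR m + σ - 1/2) (2 - 2 * alpha).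
Proof.
  intros Htau Hm. pose proof sigma_bounds. pose proof (INR_ge_1 m Hm).
  rewrite ccoef_diag.
  pose proof (ck_int_le _ Hb (INR m + σ) ltac:(lra)).
  pose proof (ck_int_ge _ Hb (INR m + σ) ltac:(lra)).
  pose proof (Rpower_gt0 (INR m + σ) (1 - alpha)).
  pose proof (Rpower_gt0 tau (2 - alpha)).
  replace (4 - 2 * alpha) with ((2 - alpha) + (2 - alpha)) by lra.
  replace (2 - 2 * alpha) with ((1 - alpha) + (1 - alpha)) by lra.
  rewrite !Rpower_plus.
  replace (81/256 * (Rpower tau (2 - alpha) * Rpower tau (2 - alpha))
           * (Rpower (INR m + σ - 1/2) (1 - alpha) * Rpower (INR m + σ - 1/2) (1 - alpha)))
    with ((9/16 * Rpower tau (2 - alpha) * Rpower (INR m + σ - 1/2) (1 - alpha)) ^ 2) by field.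
  apply pow_incr. split; nra.
Qed.

Lemma sum_sq_ccoef_diag_le_small T N k : alpha <= 3/2 -> 0 < T -> (1 <= N)%nat ->
  (1 <= k <= N)%nat ->
  sum_f 1 k (fun m => (ccoef alpha (T / INR N) m m) ^ 2)
  <= 81/256 * Rpower (σ + 1/2) (2 - 2 * alpha) * (Rpower T (3 - 2 * alpha) * T).
Proof.
  intros Hsmall HT HN Hk. pose proof sigma_bounds. pose proof (INR_ge_1 k ltac:(lia)).
  pose proof (step_size_pos T N HT HN) as Htau.
  pose proof (step_size_mul_le T N k HT HN ltac:(lia)) as Htauk.
  set (tau := T / INR N) in *.
  set (M := 81/256 * Rpower (σ + 1/2) (2 - 2 * alpha)).
  assert (HM : 0 < M) by (unfold M; pose proof (Rpower_gt0 (σ + 1/2) (2 - 2 * alpha)); lra).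
  pose proof (Rpower_gt0 tau (4 - 2 * alpha)).
  apply Rle_trans with (M * (Rpower tau (4 - 2 * alpha) * INR k)).
  - apply (sum_f_telescoping_le _ (fun m => M * (Rpower tau (4 - 2 * alpha) * INR m)));
      [lia | |].
    + pose proof (ccoef_diag_sq_le tau 1 Htau (le_n 1)) as Hsq1. change (INR 1) with 1 in *.
      replace (1 + σ - 1/2) with (σ + 1/2) in Hsq1 by lra. unfold M. lra.
    + intros m Hm. pose proof (ccoef_diag_sq_le tau (S m) Htau ltac:(lia)) as Hsq.
      pose proof (pos_INR m).
      assert (Rpower (INR (S m) + σ - 1/2) (2 - 2 * alpha) <= Rpower (σ + 1/2) (2 - 2 * alpha))
        by (apply Rle_Rpower_l_neg; rewrite ?S_INR; lra).
      rewrite S_INR in *. unfold M. nra.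
  - apply Rmult_le_compat_l; [lra|].
    replace (4 - 2 * alpha) with ((3 - 2 * alpha) + 1) by lra.
    rewrite Rpower_succ_exponent, Rmult_assoc by lra.
    apply Rmult_le_compat; [left; apply Rpower_gt0 | nra | | exact Htauk].
    apply Rle_Rpower_l; [lra|]. split; nra.
Qed.

Lemma sum_sq_ccoef_diag_le_large tau k : 3/2 < alpha -> 0 < tau -> (1 <= k)%nat ->
  sum_f 1 k (fun m => (ccoef alpha tau m m) ^ 2)
  <= 81/256 * (Rpower (σ + 1/2) (2 - 2 * alpha)
               + Rpower (σ + 1/2) (3 - 2 * alpha) / (2 * alpha - 3))
     * Rpower tau (4 - 2 * alpha).
Proof.
  intros Hlarge Htau Hk. pose proof sigma_bounds.
  set (Q := Rpower tau (4 - 2 * alpha)).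
  assert (HQ : 0 < Q) by apply Rpower_gt0.
  set (bound := fun m : nat => Rpower (σ + 1/2) (2 - 2 * alpha)
              + (Rpower (σ + 1/2) (3 - 2 * alpha) - Rpower (INR m + σ - 1/2) (3 - 2 * alpha))
                / (2 * alpha - 3)).
  apply Rle_trans with (81/256 * bound k * Q).
  - apply (sum_f_telescoping_le _ (fun m => 81/256 * bound m * Q)); [exact Hk | |].
    + pose proof (ccoef_diag_sq_le tau 1 Htau (le_n 1)) as Hsq1.
      unfold bound. change (INR 1) with 1 in *.
      replace (1 + σ - 1/2) with (σ + 1/2) in * by lra.
      rewrite Rminus_diag, Rdiv_0_l. fold Q in Hsq1. lra.
    + intros m Hm. pose proof (ccoef_diag_sq_le tau (S m) Htau ltac:(lia)) as Hsq.
      pose proof (INR_ge_1 m Hm).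
      pose proof (Rpower_le_primitive_diff (2 - 2 * alpha) (INR (S m) + σ - 1/2)
                    ltac:(lra) ltac:(lra) ltac:(rewrite S_INR; lra)) as Hprim.
      replace (2 - 2 * alpha + 1) with (3 - 2 * alpha) in Hprim by lra.
      replace (INR (S m) + σ - 1/2 - 1) with (INR m + σ - 1/2) in Hprim
        by (rewrite S_INR; lra).
      assert (E : bound (S m) - bound m
                  = (Rpower (INR (S m) + σ - 1/2) (3 - 2 * alpha)
                     - Rpower (INR m + σ - 1/2) (3 - 2 * alpha)) / (3 - 2 * alpha))
        by (unfold bound; field; lra).
      replace (81/256 * bound (S m) * Q - 81/256 * bound m * Q)
        with (81/256 * Q * (bound (S m) - bound m)) by ring.
      rewrite E. fold Q in Hsq. nra.
  - apply Rmult_le_compat_r; [lra|]. apply Rmult_le_compat_l; [lra|]. unfold bound.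
    pose proof (Rpower_gt0 (INR k + σ - 1/2) (3 - 2 * alpha)).
    assert (0 < Rpower (INR k + σ - 1/2) (3 - 2 * alpha) / (2 * alpha - 3))
      by (apply Rdiv_lt_0_compat; lra).
    unfold Rdiv in *. rewrite Rmult_minus_distr_r. lra.
Qed.

Lemma ccoef_diag_sq_sum_bound T : 0 < T ->
  exists C : R, 0 < C /\
     forall (N k : nat), (1 <= N)%nat -> (1 <= k <= N)%nat ->
       let tau := T / INR N in
       let S := sum_f 1 k (fun m => (ccoef alpha tau m m) ^ 2) in
       let K := 9 * C / (16 * (1 + 2 * σ) ^ 2) in
       (alpha < 3/2 ->
          S <= K * ((1 + σ) ^ 2 * Rpower T (3 - 2 * alpha) / (3 - 2 * alpha) * tau
                    + Rpower (1 + σ) (4 - 2 * alpha))) /\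
       (alpha = 3/2 -> S <= K * ((1 + σ) * T)) /\
       (3/2 < alpha ->
          S <= K * ((2 - 3 * σ) / (2 * alpha - 3) * Rpower (1 + σ) (4 - 2 * alpha)
                    * Rpower tau (4 - 2 * alpha))).
Proof.
  intros HT. pose proof sigma_bounds.
  assert (Hq : 0 < 16 * (1 + 2 * σ) ^ 2) by (pose proof (pow_lt (1 + 2 * σ) 2); lra).
  set (Z := 81/256 * Rpower (σ + 1/2) (2 - 2 * alpha) * (Rpower T (3 - 2 * alpha) * T)).
  assert (HZ : 0 < Z).
  { pose proof (Rpower_gt0 (σ + 1/2) (2 - 2 * alpha)). pose proof (Rpower_gt0 T (3 - 2 * alpha)).
    unfold Z. apply Rmult_lt_0_compat; nra. }
  (* [C] may depend on [α] and [T]: in each regime it makes [K] times the [τ]-free factor of the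
     right-hand side equal to the constant of [sum_sq_ccoef_diag_le_small] or [_large] *)
  destruct (total_order_T alpha (3/2)) as [[Hlt | Heq] | Hgt].
  - destruct (exists_scaled_constant _ Z (Rpower (1 + σ) (4 - 2 * alpha)) Hq HZ
                (Rpower_gt0 _ _)) as [C [HC HKw]].
    exists C. split; [exact HC|]. intros N k HN Hk. cbv zeta.
    split; [|split]; intros; try lra.
    pose proof (sum_sq_ccoef_diag_le_small T N k ltac:(lra) HT HN Hk) as HS.
    pose proof (step_size_pos T N HT HN).
    pose proof (Rpower_gt0 T (3 - 2 * alpha)).
    assert (0 <= (1 + σ) ^ 2 * Rpower T (3 - 2 * alpha) / (3 - 2 * alpha) * (T / INR N)).
    { apply Rmult_le_pos; [|lra]. apply Rdiv_le_0_compat; [|lra].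
      apply Rmult_le_pos; [apply pow_le|]; lra. }
    assert (0 < 9 * C / (16 * (1 + 2 * σ) ^ 2)) by (apply Rdiv_lt_0_compat; lra).
    rewrite Rmult_plus_distr_l, HKw. fold Z in HS. nra.
  - destruct (exists_scaled_constant _ Z ((1 + σ) * T) Hq HZ ltac:(nra)) as [C [HC HKw]].
    exists C. split; [exact HC|]. intros N k HN Hk. cbv zeta.
    split; [|split]; intros; try lra.
    rewrite HKw. apply sum_sq_ccoef_diag_le_small; auto. lra.
  - set (c := 81/256 * (Rpower (σ + 1/2) (2 - 2 * alpha)
                         + Rpower (σ + 1/2) (3 - 2 * alpha) / (2 * alpha - 3))).
    assert (Hc : 0 < c).
    { pose proof (Rpower_gt0 (σ + 1/2) (2 - 2 * alpha)).
      pose proof (Rpower_gt0 (σ + 1/2) (3 - 2 * alpha)).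
      assert (0 < Rpower (σ + 1/2) (3 - 2 * alpha) / (2 * alpha - 3))
        by (apply Rdiv_lt_0_compat; lra).
      unfold c. lra. }
    assert (Hw : 0 < (2 - 3 * σ) / (2 * alpha - 3) * Rpower (1 + σ) (4 - 2 * alpha)).
    { pose proof (Rpower_gt0 (1 + σ) (4 - 2 * alpha)).
      apply Rmult_lt_0_compat; [apply Rdiv_lt_0_compat|]; lra. }
    destruct (exists_scaled_constant _ c _ Hq Hc Hw) as [C [HC HKw]].
    exists C. split; [exact HC|]. intros N k HN Hk. cbv zeta.
    split; [|split]; intros; try lra.
    rewrite <- Rmult_assoc, HKw.
    apply sum_sq_ccoef_diag_le_large; [lra | apply step_size_pos; auto | lia].
Qed.

End Coefficients.

Theorem lemma1 (alpha T : R) :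
  1 < alpha < 2 -> 0 < T ->
  let s0 := sigma_of alpha in
  (* (i) and (ii): for every N >= 1 (tau = T/N) and every k >= 1 *)
  (forall (N k : nat), (1 <= N)%nat -> (1 <= k)%nat ->
     let tau := T / INR N in
     ((forall l : nat, (l < k)%nat -> ccoef alpha tau k l > ccoef alpha tau k (S l)) /\
      ccoef alpha tau k k > 3 * Rpower (INR k + s0) (1 - alpha) / 8 * Rpower tau (2 - alpha) /\
      3 * Rpower (INR k + s0) (1 - alpha) / 8 * Rpower tau (2 - alpha) > 0) /\
     4 * s0 * ccoef alpha tau k 0 - (1 + 2 * s0) * ccoef alpha tau k 1 > 0) /\
  (* (iii) *)
  (forall (N k : nat), (1 <= N)%nat -> (1 <= k <= N)%nat ->
     let tau := T / INR N in
     sum_f 1 k (fun m => ccoef alpha tau m (m - 1))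
       < (8 * s0 + 21) * Rpower T (2 - alpha) / (16 * (1 + 2 * s0) * s0)) /\
  (* (iv) *)
  (exists C : R, 0 < C /\
     forall (N k : nat), (1 <= N)%nat -> (1 <= k <= N)%nat ->
       let tau := T / INR N in
       let S := sum_f 1 k (fun m => (ccoef alpha tau m m) ^ 2) in
       let K := 9 * C / (16 * (1 + 2 * s0) ^ 2) in
       (alpha < 3/2 ->
          S <= K * ((1 + s0) ^ 2 * Rpower T (3 - 2 * alpha) / (3 - 2 * alpha) * tau
                    + Rpower (1 + s0) (4 - 2 * alpha))) /\
       (alpha = 3/2 -> S <= K * ((1 + s0) * T)) /\
       (3/2 < alpha ->
          S <= K * ((2 - 3 * s0) / (2 * alpha - 3) * Rpower (1 + s0) (4 - 2 * alpha)
                    * Rpower tau (4 - 2 * alpha)))).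
Proof.
  intros Halpha HT s0.
  split; [|split].
  - intros N k HN Hk tau.
    pose proof (step_size_pos T N HT HN) as Htau.
    split; [split; [|split]|].
    + intros l Hl. apply ccoef_succ_lt; assumption.
    + apply ccoef_diag_gt; assumption.
    + pose proof (Rpower_gt0 (INR k + s0) (1 - alpha)).
      pose proof (Rpower_gt0 tau (2 - alpha)). nra.
    + apply ccoef_0_1_combination_pos; assumption.
  - intros N k HN Hk tau. apply sum_ccoef_pred_lt; assumption.
  - apply ccoef_diag_sq_sum_bound; assumption.
Qed.
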